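(* For every integer $n\ge 2$, the configuration $\mathit{DCD}(n)$ is isomorphic (as a combinatorial incidence structure) to the combinatorial configuration $N(O_n)$ obtained by the $V$-construction from the Odd graph $O_n$.
   Context: $\mathit{DCD}(n)$ (Desargues–Cayley–Danzer configuration): take $2n-1$ hyperplanes in general position (no more than $n$ of them through a common point) in $n$-dimensional projective space. Each $n$ of them meet in a point and each $n-1$ of them meet in a line; the points and lines are thus labelled by the $n$-element and the $(n-1)$-element subsets of a $(2n-1)$-element set, and a point is incident with a line iff the label of the line is contained in the label of the point. As a combinatorial incidence structure, $\mathit{DCD}(n)$ has as points the $n$-subsets and as lines the $(n-1)$-subsets of $\{1,\dots,2n-1\}$, with incidence given by containment. The Odd graph $O_n$ is the Kneser graph $K(2n-1,n-1)$: its vertices are the $(n-1)$-subsets of a $(2n-1)$-element set, two being adjacent iff they are disjoint. $V$-construction: for a regular graph $G$, let $N(v)$ denote the set of neighbours of a vertex $v$. $G$ is admissible if no two distinct vertices have the same neighbourhood. For admissible $G$, $N(G)$ is the incidence structure whose points are the vertices of $G$, whose blocks are the sets $N(v)$, $v\in V(G)$, and with incidence given by membership. Two incidence structures are isomorphic if there are bijections between their point sets and between their block sets preserving incidence. *)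

From mathcomp Require Import all_boot.
Set Implicit Arguments. Unset Strict Implicit. Unset Printing Implicit Defensive.

Record incidence_structure := IncStr {
  ipoint : finType;
  iblock : finType;
  incid : ipoint -> iblock -> bool }.

Definition inc_isomorphic (S1 S2 : incidence_structure) : Prop :=
  exists (f : ipoint S1 -> ipoint S2) (g : iblock S1 -> iblock S2),
    [/\ bijective f, bijective g &
        forall p b, incid p b = incid (f p) (g b)].

Definition ksubset (T : finType) (k : nat) := {A : {set T} | #|A| == k}.

Definition DCD (n : nat) : incidence_structure :=
  @IncStr (ksubset 'I_(2 * n - 1) n) (ksubset 'I_(2 * n - 1) (n - 1))
    (fun P L => val L \subset val P).

Record graph := Graph { gvertex : finType; gadj : rel gvertex }.

Definition kneser (m k : nat) : graph :=
  @Graph (ksubset 'I_m k) (fun A B => [disjoint val A & val B]).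

Definition odd_graph (n : nat) : graph := kneser (2 * n - 1) (n - 1).

Definition nbhd (G : graph) (v : gvertex G) : {set gvertex G} :=
  [set w | gadj v w].

Definition regular (G : graph) : Prop :=
  exists d, forall v : gvertex G, #|nbhd v| = d.

Definition admissible (G : graph) : Prop :=
  forall v w : gvertex G, nbhd v = nbhd w -> v = w.

Definition nblock (G : graph) :=
  {S : {set gvertex G} | S \in [set nbhd v | v : gvertex G]}.

Definition Vconstr (G : graph) : incidence_structure :=
  @IncStr (gvertex G) (nblock G) (fun p S => p \in val S).

(** Complementation maps the n-subsets of a (2n-1)-set bijectively onto its
    (n-1)-subsets, and turns "the line L lies in the point P" into "L is
    disjoint from ~: P", i.e. into adjacency in the odd graph.  Hence DCD(n)
    is N(O_n) once we know that v |-> N(v) is injective on O_n: the union of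
    the neighbours of v is exactly the complement of v. *)

From mathcomp Require Import all_boot.
From mathcomp Require Import zify.
Set Implicit Arguments. Unset Strict Implicit. Unset Printing Implicit Defensive.

Lemma card_setC_ksubset (T : finType) (k l : nat) (A : {set T}) :
  k + l = #|T| -> #|A| == k -> #|~: A| == l.
Proof. by move=> card_T /eqP cardA; have := cardsC A; rewrite cardA -card_T => /addnI ->. Qed.

Definition ksubsetC (T : finType) (k l : nat) (card_T : k + l = #|T|)
    (A : ksubset T k) : ksubset T l :=
  exist _ (~: val A) (card_setC_ksubset card_T (valP A)).

Lemma ksubsetC_bij (T : finType) (k l : nat) (card_T : k + l = #|T|) :
  bijective (ksubsetC card_T).
Proof.
have card_T' : l + k = #|T| by rewrite addnC.
by exists (ksubsetC card_T') => A; apply: val_inj; rewrite /= setCK.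
Qed.

Section Kneser.
Variables (m k : nat).
Let G := kneser m k.

Lemma kneser_nbhdE (v : gvertex G) :
  val @: nbhd v = [set A : {set 'I_m} | A \subset ~: val v & #|A| == k].
Proof.
apply/setP => A; rewrite inE; apply/imsetP/andP.
- case=> w; rewrite inE /= => vw ->.
  by rewrite -disjoints_subset disjoint_sym vw (valP w).
- case=> Av cardA; exists (exist _ A cardA) => //.
  by rewrite inE /= disjoint_sym disjoints_subset.
Qed.

Lemma card_kneser_setC (v : gvertex G) : #|~: val v| = m - k.
Proof. by have := cardsC (val v); rewrite card_ord (eqP (valP v)); lia. Qed.

Lemma card_kneser_nbhd (v : gvertex G) : #|nbhd v| = 'C(m - k, k).
Proof.
by rewrite -(card_imset _ val_inj) kneser_nbhdE cards_draws card_kneser_setC.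
Qed.

Lemma kneser_regular : regular G.
Proof. by exists 'C(m - k, k); apply: card_kneser_nbhd. Qed.

Hypotheses (k_gt0 : 0 < k) (k_le : k <= m - k).

(* Each x outside v lies in a k-set x |: C with C a (k-1)-subset of ~: v :\ x. *)
Lemma kneser_nbhd_cover (v : gvertex G) :
  \bigcup_(w in nbhd v) val w = ~: val v.
Proof.
apply/setP => x; apply/bigcupP/idP.
- case=> w; rewrite inE /= disjoint_sym disjoints_subset => /subsetP wv.
  exact: wv.
- move=> xv.
  have card_rest : #|~: val v :\ x| = m - k - 1.
    by have := cardsD1 x (~: val v); rewrite xv card_kneser_setC; lia.
  have : 0 < #|[set C : {set 'I_m} | C \subset ~: val v :\ x & #|C| == k - 1]|.
    by rewrite cards_draws card_rest bin_gt0; lia.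
  case/card_gt0P => C; rewrite inE => /andP [/subsetP Cv /eqP cardC].
  have xC : x \notin C by apply/negP => /Cv; rewrite !inE eqxx.
  have cardxC : #|x |: C| == k by rewrite cardsU1 xC cardC; apply/eqP; lia.
  exists (exist _ (x |: C) cardxC); last by rewrite /= setU11.
  rewrite inE /= disjoint_sym disjoints_subset; apply/subsetP => y.
  by rewrite !inE => /predU1P [-> | /Cv]; [rewrite inE in xv | rewrite !inE => /andP []].
Qed.

Lemma kneser_admissible : admissible G.
Proof.
move=> v w vw; apply/val_inj/setC_inj.
by rewrite -!kneser_nbhd_cover vw.
Qed.

End Kneser.

Section VConstruction.
Variable G : graph.

Definition nblock_of (v : gvertex G) : nblock G :=
  exist _ (nbhd v) (imset_f _ isT).

Lemma nblock_of_bij : admissible G -> bijective nblock_of.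
Proof.
move=> admG; apply: inj_card_bij => [v w /(congr1 val) /admG // | ].
rewrite card_sig (@eq_card _ _ [set nbhd v | v : gvertex G]) //.
by rewrite card_imset.
Qed.

End VConstruction.

Theorem theorem3p4 (n : nat) (hn : 2 <= n) :
  [/\ regular (odd_graph n), admissible (odd_graph n) &
      inc_isomorphic (DCD n) (Vconstr (odd_graph n))].
Proof.
have admO : admissible (odd_graph n) by apply: kneser_admissible; lia.
split=> //; first exact: kneser_regular.
have card_T : n + (n - 1) = #|'I_(2 * n - 1)| by rewrite card_ord; lia.
exists (ksubsetC card_T), (@nblock_of (odd_graph n)); split.
- exact: ksubsetC_bij.
- exact: nblock_of_bij.
- by move=> P L; rewrite /= inE /= disjoints_subset setCK.
Qed.
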